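(* For $k\ge2$ the polynomial $P_k(x)$ has integer coefficients. If $\ell>3$ is prime, then $$P_{\frac{\ell+1}{2}}(x)\equiv\frac{\ell+1}{2}\left(1+(1-24x)^{\frac{\ell-1}{2}}\right)\pmod{\ell}$$ (coefficientwise).
   Context: $P_k(x)\in\mathbb{Q}[x]$ is defined by $P_0:=0$, $P_1:=1$, and for $k\ge2$, $P_k(x):=-\frac{1}{(2k-1)(k-1)}\sum_{i=1}^{k-1}\left(6x\binom{2k}{2i}(2^{2i-1}-1)+\binom{2k}{2i+2}(2^{2i+1}-1)-2^{2i}\binom{2k}{2i+1}+\binom{2k}{2i}\right)P_{k-i}(x)$. *)

From HB Require Import structures.
From mathcomp Require Import all_boot all_order all_algebra.
Set Implicit Arguments. Unset Strict Implicit. Unset Printing Implicit Defensive.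
Import Order.TTheory GRing.Theory Num.Theory.
Local Open Scope ring_scope.

Definition coefA (k i : nat) : rat :=
  ('C(k.*2, i.*2))%:R * ((2 ^ (i.*2).-1)%:R - 1).

Definition coefB (k i : nat) : rat :=
  ('C(k.*2, (i.*2).+2))%:R * ((2 ^ (i.*2).+1)%:R - 1)
  - (2 ^ i.*2)%:R * ('C(k.*2, (i.*2).+1))%:R
  + ('C(k.*2, i.*2))%:R.

(* One step of the recurrence, given s = [:: P_0; ...; P_(k-1)]. *)
Definition Pstep (k : nat) (s : seq {poly rat}) : {poly rat} :=
  - (((k.*2).-1)%:R * (k.-1)%:R)^-1 *:
    \sum_(1 <= i < k)
      ((6%:R * coefA k i) *: 'X + (coefB k i)%:P) * nth 0 s (k - i).

Fixpoint Pseq (n : nat) : seq {poly rat} :=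
  match n with
  | 0 => [:: 0]
  | 1 => [:: 0; 1]
  | m.+1 => let s := Pseq m in rcons s (Pstep m.+1 s)
  end.

Definition P (k : nat) : {poly rat} := nth 0 (Pseq k) k.

From Pilot Require Import Defs.
From HB Require Import structures.
From mathcomp Require Import all_boot all_order all_algebra.
From mathcomp Require Import ring zify.
Set Implicit Arguments. Unset Strict Implicit. Unset Printing Implicit Defensive.
Import Order.TTheory GRing.Theory Num.Theory.
Local Open Scope ring_scope.

(* P_k is the term F_(2k) of the Lucas sequence F_0 = 0, F_1 = 1,
   F_(n+2) = F_(n+1) + t F_n with t = -6x.  To see that F_(2k) obeys the
   recurrence defining P_k, let L be the linear functional on polynomials
   in y sending y^n to F_n.  It kills the multiples of y^2 - y - t and, since
   L p = (p(a) - p(b)) / (a - b) for the roots a and b = 1 - a of y^2 - y - t,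
   it changes sign under y |-> 1 - y.  Modulo y^2 - y - t, twice the
   recurrence sum is a combination of binomial expansions of the form
   g(y) + g(1 - y), plus multiples of y - y^2 and of 1 that L also kills.
   The closed form F_(n+1) = sum_j (-6x)^j C(n-j, j) gives integrality, and
   for a prime l = 2m + 1 the binomials C(l - j, j) and C(m, j) are compared
   modulo l through l - a = -a and 2 (m + 1) = 1. *)

Section BinomialParity.
Variable R : comNzRingType.
Implicit Types y s : R.

Lemma big_ord_double_parity (f : nat -> R) k :
  \sum_(j < k.*2.+1) f j = \sum_(i < k.+1) f i.*2 + \sum_(i < k) f i.*2.+1.
Proof.
elim: k => [|k IH]; first by rewrite !big_ord1 big_ord0 addr0.
rewrite doubleS 2!big_ord_recr /= IH [in RHS]big_ord_recr.
rewrite [X in _ = _ + X]big_ord_recr /= doubleS; ring.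
Qed.

Definition bin_term y s n j := y ^+ (n - j) * s ^+ j *+ 'C(n, j).
Definition bin_even y s k := \sum_(i < k.+1) bin_term y s k.*2 i.*2.
Definition bin_odd y s k := \sum_(i < k) bin_term y s k.*2 i.*2.+1.

Lemma exprD_double y s k : (y + s) ^+ k.*2 = bin_even y s k + bin_odd y s k.
Proof. by rewrite exprDn (big_ord_double_parity (bin_term y s k.*2)). Qed.

Lemma exprN_double y k : (- y) ^+ k.*2 = y ^+ k.*2.
Proof. by rewrite exprNn -signr_odd odd_double mul1r. Qed.

Lemma exprB_double y s k : (y - s) ^+ k.*2 = bin_even y s k - bin_odd y s k.
Proof.
rewrite exprDn (big_ord_double_parity (bin_term y (- s) k.*2)) -sumrN.
congr (_ + _); apply: eq_bigr => i _; rewrite /bin_term.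
  by rewrite exprN_double.
by rewrite exprS exprN_double mulNr mulrN mulNrn -exprS.
Qed.

End BinomialParity.

Definition recA {R : nzRingType} k i : R :=
  ('C(k.*2, i.*2))%:R * ((2 ^ (i.*2).-1)%:R - 1).
Definition recB {R : nzRingType} k i : R :=
  ('C(k.*2, (i.*2).+2))%:R * ((2 ^ (i.*2).+1)%:R - 1)
  - (2 ^ i.*2)%:R * ('C(k.*2, (i.*2).+1))%:R + ('C(k.*2, i.*2))%:R.

Lemma rmorph_recA (R S : nzRingType) (f : {rmorphism R -> S}) k i :
  f (recA k i) = recA k i.
Proof. by rewrite rmorphM rmorphB /= !rmorph_nat ?rmorph1. Qed.

Lemma rmorph_recB (R S : nzRingType) (f : {rmorphism R -> S}) k i :
  f (recB k i) = recB k i.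
Proof. by rewrite /recB !(rmorphB, rmorphD, rmorphM) /= !rmorph_nat rmorph1. Qed.

Section RecurrenceIdentity.
Variable R : comNzRingType.
Implicit Types y z : R.

(* The recurrence sum for P_k with t replaced by y - y^2, i.e. read modulo
   y^2 - y - t. *)
Definition rec_poly y k :=
  \sum_(1 <= i < k) ((y - y ^+ 2) * recA k i + recB k i) * y ^+ (k.*2 - i.*2)
  + ((k.*2).-1)%:R * (k.-1)%:R * y ^+ k.*2.

Definition rec_kernel k z := z * (2 - z) ^+ k.*2 + z ^+ k.*2.+1.

Lemma rec_term_double y k i : (0 < i < k)%N ->
  (((y - y ^+ 2) * recA k i + recB k i) * y ^+ (k.*2 - i.*2)) *+ 2 =
    (y - y ^+ 2) * bin_term y 2 k.*2 i.*2
  - (y - y ^+ 2) * bin_term y 1 k.*2 i.*2 *+ 2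
  + y ^+ 2 * bin_term y 2 k.*2 i.+1.*2
  - y ^+ 2 * bin_term y 1 k.*2 i.+1.*2 *+ 2
  - y * bin_term y 2 k.*2 i.*2.+1 + bin_term y 1 k.*2 i.*2 *+ 2.
Proof.
case: i => // i /andP[_ lt_ik]; rewrite /recA /recB /bin_term.
have [j ->] : exists j, k = (j + i.+2)%N by exists (k - i.+2)%N; rewrite subnK.
have -> : ((j + i.+2).*2 - i.+1.*2 = j.*2.+2)%N by rewrite -!muln2; lia.
have -> : ((j + i.+2).*2 - i.+2.*2 = j.*2)%N by rewrite -!muln2; lia.
have -> : ((j + i.+2).*2 - i.+1.*2.+1 = j.*2.+1)%N by rewrite -!muln2; lia.
rewrite !doubleS /= !expr1n !mulr1 !natrX !exprS.
ring.
Qed.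

Lemma bin2_double k : 'C(k.+2.*2, 2) = (k.+2 * k.*2.+3)%N.
Proof.
rewrite bin2 (_ : k.+2.*2 * _ = (k.+2 * k.*2.+3).*2)%N ?half_double //.
by rewrite doubleMl doubleS.
Qed.

Lemma rec_poly_double y k : (1 < k)%N ->
  rec_poly y k *+ 2 = rec_kernel k y + rec_kernel k (1 - y)
                      - ((2 ^ k.*2)%:R - 2) * (y - y ^+ 2) - 2.
Proof.
move=> lt1k; have lt0k := ltnW lt1k.
have sum_even s : \sum_(1 <= i < k) bin_term y s k.*2 i.*2
                  = bin_even y s k - y ^+ k.*2 - s ^+ k.*2.
  rewrite /bin_even -(big_mkord xpredT (fun i => bin_term y s k.*2 i.*2)).
  rewrite big_ltn // big_nat_recr //= /bin_term subn0 subnn bin0 binn; ring.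
have sum_even_shift s : \sum_(1 <= i < k) bin_term y s k.*2 i.+1.*2
                        = bin_even y s k - y ^+ k.*2 - bin_term y s k.*2 2.
  rewrite /bin_even -(big_mkord xpredT (fun i => bin_term y s k.*2 i.*2)).
  rewrite big_ltn // big_ltn // big_add1 /= {2}/bin_term subn0 bin0; ring.
have sum_odd s : \sum_(1 <= i < k) bin_term y s k.*2 i.*2.+1
                 = bin_odd y s k - bin_term y s k.*2 1.
  rewrite /bin_odd -(big_mkord xpredT (fun i => bin_term y s k.*2 i.*2.+1)).
  rewrite big_ltn //; ring.
rewrite /rec_poly mulrnDl -sumrMnl (eq_big_nat _ _ (fun i => @rec_term_double y k i)).
rewrite !big_split /= !sumrN !sumrMnl -!mulr_sumr.
rewrite (sum_even 1) (sum_even 2) (sum_even_shift 1) (sum_even_shift 2) sum_odd.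
rewrite /rec_kernel.
have -> : 2 - y = - (y - 2) by ring.
have -> : 2 - (1 - y) = y + 1 by ring.
have -> : 1 - y = - (y - 1) by ring.
rewrite (exprS (- (y - 1))) !exprN_double.
rewrite (exprB_double y 2) (exprD_double y 1) (exprB_double y 1) !expr1n.
case: k lt1k {lt0k sum_even sum_even_shift sum_odd} => [|[|k]] // _.
rewrite /bin_term /= bin1 bin2_double !expr1n.
have -> : (k.+2.*2 - 2 = k.*2.+2)%N by rewrite -!muln2; lia.
have -> : (k.+2.*2 - 1 = k.*2.+3)%N by rewrite -!muln2; lia.
rewrite natrX !doubleS !exprS; ring.
Qed.

End RecurrenceIdentity.

Section SeqEval.
Variable R : comNzRingType.
Implicit Types (f : nat -> R) (p : {poly R}).

Definition seq_eval f p := \sum_(i < size p) p`_i * f i.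

Lemma seq_eval_widen f p n :
  (size p <= n)%N -> seq_eval f p = \sum_(i < n) p`_i * f i.
Proof.
move=> le_pn; rewrite /seq_eval (big_ord_widen _ (fun i => p`_i * f i) le_pn).
rewrite big_mkcond; apply: eq_bigr => i _.
by case: ltnP => // le_pi; rewrite nth_default ?mul0r.
Qed.

Lemma seq_eval0 f : seq_eval f 0 = 0.
Proof. by rewrite /seq_eval size_poly0 big_ord0. Qed.

Lemma seq_evalD f p q : seq_eval f (p + q) = seq_eval f p + seq_eval f q.
Proof.
pose n := (size p + size q)%N.
have le_pqn : (size (p + q)%R <= n)%N.
  by rewrite (leq_trans (size_polyD _ _)) // geq_max leq_addr leq_addl.
rewrite !(@seq_eval_widen f _ n) ?leq_addr ?leq_addl // -big_split /=.
by apply: eq_bigr => i _; rewrite coefD mulrDl.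
Qed.

HB.instance Definition _ f :=
  GRing.isNmodMorphism.Build {poly R} R (seq_eval f) (seq_eval0 f, seq_evalD f).

Lemma seq_evalZ f c p : seq_eval f (c *: p) = c * seq_eval f p.
Proof.
rewrite (seq_eval_widen f (size_scale_leq c p)) /seq_eval mulr_sumr.
by apply: eq_bigr => i _; rewrite coefZ mulrA.
Qed.

Lemma seq_evalCM f c p : seq_eval f (c%:P * p) = c * seq_eval f p.
Proof. by rewrite mul_polyC seq_evalZ. Qed.

Lemma seq_evalXM f p : seq_eval f ('X * p) = seq_eval (fun i => f i.+1) p.
Proof.
have le_Xp : (size ('X * p)%R <= (size p).+1)%N.
  by rewrite (leq_trans (size_polyMleq _ _)) // size_polyX.
rewrite (seq_eval_widen f le_Xp) big_ord_recl coefXM mul0r add0r.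
by apply: eq_bigr => i _; rewrite coefXM.
Qed.

Lemma seq_evalXn f n : seq_eval f 'X^n = f n.
Proof.
elim: n f => [|n IHn] f; last by rewrite exprS seq_evalXM IHn.
by rewrite expr0 /seq_eval size_poly1 big_ord1 coef1 mul1r.
Qed.

Lemma seq_evalX f : seq_eval f 'X = f 1%N.
Proof. by rewrite -(expr1 'X) seq_evalXn. Qed.

Lemma seq_evalC f c : seq_eval f c%:P = c * f 0%N.
Proof. by rewrite -[c%:P]mulr1 -(expr0 'X) seq_evalCM seq_evalXn. Qed.

End SeqEval.

Section LucasSequence.
Variables (R : comNzRingType) (t : R).

Fixpoint lucas n :=
  if n is n'.+1 then (if n' is m.+1 then lucas n' + t * lucas m else 1) else 0.

Lemma lucas0 : lucas 0 = 0. Proof. by []. Qed.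
Lemma lucas1 : lucas 1 = 1. Proof. by []. Qed.

Lemma lucasSS n : lucas n.+2 = lucas n.+1 + t * lucas n.
Proof. by []. Qed.

Definition lucas_char : {poly R} := 'X^2 - 'X - t%:P.

Lemma seq_eval_lucas_charM q : seq_eval lucas (lucas_char * q) = 0.
Proof.
have -> : lucas_char * q = 'X * ('X * q) - 'X * q - t%:P * q.
  by rewrite /lucas_char; ring.
rewrite !raddfB /= !seq_evalXM seq_evalCM /seq_eval mulr_sumr -!sumrB.
by apply: big1 => i _; cbv beta; rewrite lucasSS; ring.
Qed.

Lemma seq_eval_lucas_1subX m : seq_eval lucas ((1 - 'X) ^+ m) = - lucas m.
Proof.
elim/ltn_ind: m => -[|[|n]] IH.
- by rewrite expr0 -(expr0 'X) seq_evalXn oppr0.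
- by rewrite expr1 raddfB /= -(expr0 'X) -{2}(expr1 'X) !seq_evalXn sub0r.
have -> : (1 - 'X) ^+ n.+2 = (1 - 'X) ^+ n.+1 + t%:P * (1 - 'X) ^+ n
                             + lucas_char * (1 - 'X) ^+ n.
  by rewrite /lucas_char !exprS; ring.
rewrite !seq_evalD seq_evalCM seq_eval_lucas_charM !IH // lucasSS; ring.
Qed.

Lemma seq_eval_lucas_comp1subX p :
  seq_eval lucas (p \Po (1 - 'X)) = - seq_eval lucas p.
Proof.
rewrite comp_polyE raddf_sum /= [in RHS]/seq_eval -sumrN.
by apply: eq_bigr => i _; rewrite seq_evalZ seq_eval_lucas_1subX mulrN.
Qed.

Lemma seq_eval_lucas_rec_poly k :
  GRing.lreg (2 : R) -> (1 < k)%N -> seq_eval lucas (rec_poly 'X k) = 0.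
Proof.
move=> reg2 lt1k; apply: reg2; rewrite mulr0 mulr_natl -(raddfMn (seq_eval lucas)).
rewrite rec_poly_double //.
have -> : rec_kernel k (1 - 'X) = rec_kernel k 'X \Po (1 - 'X : {poly R}).
  by rewrite /rec_kernel rmorphD rmorphM !rmorphXn rmorphB /= comp_polyX rmorph_nat.
have -> : ((2 ^ k.*2)%:R - 2 : {poly R}) = ((2 ^ k.*2)%:R - 2)%:P.
  by rewrite rmorphB /= !rmorph_nat.
have -> : (2 : {poly R}) = 2%:P by rewrite rmorph_nat.
rewrite !(raddfB (seq_eval lucas)) (raddfD (seq_eval lucas)) /=.
rewrite seq_eval_lucas_comp1subX seq_evalCM (raddfB (seq_eval lucas)) /=.
by rewrite seq_evalX seq_evalXn seq_evalC lucasSS lucas1 lucas0; ring.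
Qed.

Lemma lucas_rec k : GRing.lreg (2 : R) -> (1 < k)%N ->
  \sum_(1 <= i < k) (recB k i - t * recA k i) * lucas (k - i).*2
  = - ((k.*2).-1%:R * (k.-1)%:R) * lucas k.*2.
Proof.
move=> reg2 lt1k.
pose c i := recB k i - t * recA k i.
have polyC_c i : (c i)%:P = ('X - 'X ^+ 2) * recA k i + recB k i + lucas_char * recA k i.
  by rewrite rmorphB rmorphM /= rmorph_recA rmorph_recB /lucas_char; ring.
pose M := \sum_(1 <= i < k) recA k i * 'X^(k.*2 - i.*2) : {poly R}.
have split_rec : \sum_(1 <= i < k) (c i)%:P * 'X^(k.*2 - i.*2)
                 + ((k.*2).-1%:R * (k.-1)%:R)%:P * 'X^(k.*2)
                 = rec_poly 'X k + lucas_char * M.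
  rewrite /rec_poly /M mulr_sumr addrAC -big_split /= rmorphM /= !rmorph_nat.
  by congr (_ + _); apply: eq_bigr => i _; rewrite polyC_c; ring.
have : seq_eval lucas (rec_poly 'X k + lucas_char * M) = 0.
  by rewrite seq_evalD seq_eval_lucas_charM seq_eval_lucas_rec_poly // addr0.
rewrite -split_rec seq_evalD raddf_sum /= seq_evalCM seq_evalXn.
move=> /eqP; rewrite addr_eq0 mulNr => /eqP <-.
by apply: eq_big_nat => i _; rewrite seq_evalCM seq_evalXn doubleB.
Qed.

End LucasSequence.

Lemma P_step_coef k i :
  (6%:R * coefA k i) *: 'X + (Defs.coefB k i)%:P
  = recB k i - ((-6) *: 'X) * recA k i :> {poly rat}.
Proof.
rewrite /coefA /Defs.coefB /recA /recB -!mul_polyC.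
by rewrite !(rmorphB, rmorphD, rmorphM, rmorphN) /= !rmorph_nat rmorph1; ring.
Qed.

Lemma Pseq_lucas n : Pseq n = [seq lucas ((-6) *: 'X) i.*2 | i <- iota 0 n.+1].
Proof.
elim: n => [|[|n] IHn] //; first by rewrite /= mulr0 addr0.
have -> : Pseq n.+2 = rcons (Pseq n.+1) (Pstep n.+2 (Pseq n.+1)) by [].
have -> : iota 0 n.+3 = rcons (iota 0 n.+2) n.+2 by rewrite -cats1 -[n.+3]addn1 iotaD.
rewrite IHn map_rcons; congr rcons; rewrite /Pstep.
have reg2 : GRing.lreg (2 : {poly rat}).
  by apply/lregP; rewrite -(rmorph_nat polyC) polyC_eq0 pnatr_eq0.
have cst_neq0 : ((n.+2.*2).-1%:R * (n.+2.-1)%:R : rat) != 0.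
  by rewrite mulf_neq0 ?pnatr_eq0.
rewrite (eq_big_nat _ _ (F2 := fun i => (recB n.+2 i - ((-6) *: 'X) * recA n.+2 i)
                                        * lucas ((-6) *: 'X) (n.+2 - i).*2)).
  rewrite lucas_rec //.
  have -> : ((n.+2.*2).-1%:R * (n.+2.-1)%:R : {poly rat})
            = ((n.+2.*2).-1%:R * (n.+2.-1)%:R : rat)%:P.
    by rewrite rmorphM /= !rmorph_nat.
  by rewrite mulNr mul_polyC scalerN scaleNr opprK scalerA mulVf // scale1r.
move=> i /andP[lt0i lt_i]; rewrite P_step_coef (nth_map 0%N) ?size_iota; last by lia.
by rewrite nth_iota ?add0n //; lia.
Qed.

Lemma P_lucas k : P k = lucas ((-6) *: 'X) k.*2.
Proof. by rewrite /P Pseq_lucas (nth_map 0%N) ?size_iota // nth_iota. Qed.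

Section LucasCoefficients.
Variables (R : comNzRingType) (c : R).

Lemma coef_lucas n j : (lucas (c *: 'X) n.+1)`_j = c ^+ j * ('C(n - j, j))%:R.
Proof.
elim/ltn_ind: n j => -[|[|n]] IH j.
- by rewrite lucas1 coef1; case: j => [|j]; rewrite ?mulr1 // bin0n mulr0.
- rewrite lucasSS lucas1 lucas0 mulr0 addr0 coef1.
  by case: j => [|[|j]]; rewrite ?mulr1 // ?sub0n bin0n mulr0.
rewrite lucasSS coefD -scalerAl coefZ coefXM IH //.
case: j => [|j] /=; first by rewrite mulr0 addr0 !subn0 !bin0.
rewrite IH // mulrA -exprS -mulrDr; congr (_ * _).
have [le_jn | lt_nj] := leqP j n.
  by rewrite !subSS (subSn le_jn) binS natrD.
rewrite !subSS !(eqP (ltnW lt_nj)) ?(eqP lt_nj) !bin0n.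
by case: j lt_nj => // j _; rewrite addr0.
Qed.

Lemma coef_exp_1DZX m j : ((1 + c *: 'X) ^+ m)`_j = c ^+ j *+ 'C(m, j).
Proof.
elim: m j => [|m IHm] j; first by rewrite expr0 coef1; case: j.
rewrite exprS mulrDl mul1r coefD -scalerAl coefZ coefXM IHm.
case: j => [|j]; first by rewrite !bin0 mulr0 addr0.
by rewrite /= IHm binS mulrnDr exprS mulrnAr.
Qed.

End LucasCoefficients.

Lemma double_prod_ord_addn j :
  (2 * \prod_(i < j.+1) (j.+1 + i) = 2 ^ j.+1 * \prod_(i < j.+1) i.*2.+1)%N.
Proof.
elim: j => [|j IHj]; first by rewrite !big_ord1.
apply/eqP; rewrite -(eqn_pmul2l (ltn0Sn j)); apply/eqP.
have shift : (j.+1 * \prod_(i < j.+2) (j.+2 + i)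
              = \prod_(i < j.+1) (j.+1 + i) * (j.+1 + j.+1) * (j.+1 + j.+1).+1)%N.
  transitivity (\prod_(i < j.+3) (j.+1 + i))%N.
    rewrite [RHS]big_ord_recl addn0; congr (_ * _)%N.
    by apply: eq_bigr => i _; rewrite /= /bump /= add1n addnS.
  by rewrite 2![in LHS]big_ord_recr /= (addnS j.+1 j.+1).
rewrite mulnCA shift [in RHS]big_ord_recr /= !expnS.
move: IHj; rewrite expnS.
set a := (\prod_(i < j.+1) (j.+1 + i))%N; set b := (\prod_(i < j.+1) i.*2.+1)%N.
set p := (2 ^ j)%N; nia.
Qed.

(* The j-th coefficient of P_(m+1) - (m+1) (1 + (1 - 24x)^m). *)
Definition coef_gap {R : nzRingType} m j : R :=
  (-6) ^+ j * ('C(m.*2.+1 - j, j))%:R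
  - (m.+1)%:R * ((j == 0%N)%:R + (-24) ^+ j * ('C(m, j))%:R).

Lemma rmorph_coef_gap (R S : nzRingType) (f : {rmorphism R -> S}) m j :
  f (coef_gap m j) = coef_gap m j.
Proof. by rewrite !(rmorph_nat, rmorphB, rmorphD, rmorphM, rmorphXn, rmorphN). Qed.

Section PrimeCharacteristic.
Variables (F : fieldType) (m : nat).
Hypothesis charF : m.*2.+1 \in [pchar F].

Lemma natr_compl a b : (a + b)%N = m.*2.+1 -> a%:R = - b%:R :> F.
Proof. by move=> ab; apply/eqP; rewrite -addr_eq0 -natrD ab (pcharf0 charF). Qed.

Lemma fact_pchar_neq0 n : (n <= m.*2)%N -> n`!%:R != 0 :> F.
Proof.
elim: n => [|n IHn] le_n; first by rewrite oner_neq0.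
rewrite factS natrM mulf_neq0 ?IHn 1?ltnW // -(dvdn_pcharf charF).
by apply/negP => /(dvdn_leq (ltn0Sn n)); lia.
Qed.

Lemma prod_pchar_compl J : (J <= m)%N ->
  \prod_(i < J) (m.*2.+1 - J - i)%:R = (-1) ^+ J * \prod_(i < J) (J + i)%:R :> F.
Proof.
move=> le_Jm; rewrite (eq_bigr (fun i : 'I_J => - (J + i)%:R)) ?prodrN ?card_ord //.
by move=> i _; apply: natr_compl; have := ltn_ord i; lia.
Qed.

Lemma prod_pchar_half J : (J <= m)%N ->
  2 ^+ J * \prod_(i < J) (m - i)%:R = (-1) ^+ J * \prod_(i < J) i.*2.+1%:R :> F.
Proof.
move=> le_Jm.
have -> : 2 ^+ J * \prod_(i < J) (m - i)%:R = \prod_(i < J) (2 * (m - i)%:R) :> F.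
  by rewrite prodrMl card_ord.
rewrite (eq_bigr (fun i : 'I_J => - i.*2.+1%:R)) ?prodrN ?card_ord //.
by move=> i _; rewrite -natrM; apply: natr_compl; have := ltn_ord i; lia.
Qed.

Lemma coef_gap_pchar j : coef_gap m j = 0 :> F.
Proof.
have half_m1 : (m.+1)%:R * 2 = 1 :> F.
  by rewrite -natrM (_ : (m.+1 * 2 = m.*2.+1 + 1)%N) ?natrD ?(pcharf0 charF) ?add0r //; lia.
apply/eqP; rewrite subr_eq0; apply/eqP.
case: j => [|j]; first by rewrite !expr0 !mul1r !bin0 -[LHS]half_m1.
have [lt_mj | le_jm] := ltnP m j.+1.
  by rewrite !bin_small /= ?mulr0n ?mulr0 ?addr0 ?mulr0 //; lia.
rewrite /= mulr0n add0r; set J := j.+1.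
apply: (mulfI (fact_pchar_neq0 (_ : J <= m.*2)%N)); first by lia.
rewrite mulrCA -natrM mulnC bin_ffact ffact_prod natr_prod prod_pchar_compl //.
rewrite [RHS]mulrCA [in RHS](mulrCA J`!%:R) -natrM mulnC bin_ffact ffact_prod natr_prod.
set x := \prod_(i < J) (J + i)%:R; set y := \prod_(i < J) (m - i)%:R.
pose z : F := \prod_(i < J) i.*2.+1%:R.
have two_x : 2 * x = 2 ^+ J * z :> F.
  by rewrite /x /z -!natr_prod -natrX -!natrM double_prod_ord_addn.
have two_y : 2 ^+ J * y = (-1) ^+ J * z := prod_pchar_half le_jm.
transitivity ((m.+1)%:R * ((-6) ^+ J * (-1) ^+ J * (2 * x)) : F).
  by rewrite -[LHS]mulr1 -[X in _ * X]half_m1; ring.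
rewrite (_ : -24 = -12 * 2 :> F); last by ring.
rewrite two_x exprMn -[in RHS]mulrA two_y; congr (_ * _).
by rewrite !mulrA -!exprMn; congr (_ ^+ _ * _); ring.
Qed.

End PrimeCharacteristic.

Lemma dvdz_coef_gap m j : prime m.*2.+1 -> ((m.*2.+1)%:Z %| coef_gap m j)%Z.
Proof.
move=> l_prime; have charF := pchar_Fp l_prime.
by rewrite (dvdz_pcharf charF) (rmorph_coef_gap intr) coef_gap_pchar.
Qed.

Theorem corollary7p2 :
  (forall (k : nat), (2 <= k)%N -> forall i : nat, (P k)`_i \is a Num.int) /\
  (forall (l : nat), prime l -> (3 < l)%N ->
     forall i : nat, exists z : int,
       (P (l.+1 %/ 2) - (l.+1 %/ 2)%:R *: (1 + (1 - 24%:R *: 'X) ^+ (l.-1 %/ 2)))`_i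
         = l%:R * z%:~R).
Proof.
split=> [k le2k i | l l_prime lt3l j].
  rewrite P_lucas -(prednK (_ : 0 < k.*2)%N) ?double_gt0 1?ltnW // coef_lucas.
  by rewrite rpredM ?rpredX ?rpredN ?natr_int.
have [m def_l] : exists m, l = m.*2.+1.
  case: (even_prime l_prime) => [l2 | odd_l]; first by rewrite l2 in lt3l.
  by exists l./2; rewrite -[LHS]odd_double_half odd_l.
subst l; rewrite -[m.*2.+2]/(m.+1).*2 -[m.*2.+1.-1]/m.*2 -!muln2 !mulnK // !muln2.
rewrite P_lucas coefB coef_lucas coefZ coefD coef1 -scaleNr coef_exp_1DZX.
have /dvdzP [z gap_z] := dvdz_coef_gap j l_prime.
exists z; rewrite -(mulr_natr _ 'C(m, j)) -[LHS]/(coef_gap m j).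
by rewrite -(rmorph_coef_gap intr) gap_z rmorphM /= mulrC.
Qed.
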